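(* Let $G=(V,E)$ be a graph with arboricity $\alpha$, let $h\le\log\alpha$, and consider Procedure Arboricity Edge-Coloring$(G,h)$. For every $0\le i\le h$, the arboricity $\alpha^{(i)}$ of any graph $G^{(i)}$ computed after $i$ levels of recursion of the invocation of Procedure Oriented Edge-Coloring inside Arboricity Edge-Coloring satisfies $\alpha^{(i)}\le\frac{\alpha}{2^{i-1}}+1$.
   Context: Logarithms are base 2. The arboricity of a graph $H$ is $\max_{S\subseteq V(H),|S|\ge2}\lceil |E(H[S])|/(|S|-1)\rceil$. An oriented degree-splitting of $(H,\mu)$ with discrepancy $\kappa$ is a partition $(E_1,E_2)$ of $E(H)$ such that for every vertex $v$, the numbers of incoming edges of $v$ in $E_1$ and in $E_2$ differ by at most $\kappa$, and likewise for outgoing edges. Procedure Forests-Decomposition Orientation$(G)$: starting from $\mathcal A=V$, repeatedly pick $v\in\mathcal A$ of minimum degree in $G[\mathcal A]$, orient every edge from $v$ to its neighbours in $\mathcal A$, and remove $v$ from $\mathcal A$, until $\mathcal A=\emptyset$ (the resulting orientation has out-degree at most $2\alpha$). Procedure Oriented Edge-Coloring$(H,\mu,h)$: if $h=0$, return a proper $(\Delta(H)+1)$-edge-coloring of $H$ from a base-case subroutine; otherwise compute an oriented degree-splitting $(E_1,E_2)$ of $(H,\mu)$ with discrepancy at most 1, recursively call Oriented Edge-Coloring$(H_1,\mu,h-1)$ and Oriented Edge-Coloring$(H_2,\mu,h-1)$ on $H_1=(V,E_1)$, $H_2=(V,E_2)$ (orientation induced by $\mu$), and merge the colorings using disjoint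 palettes. Procedure Arboricity Edge-Coloring$(G,h)$: compute $\mu=$ Forests-Decomposition Orientation$(G)$ and return Oriented Edge-Coloring$(G,\mu,h)$. $G^{(0)}=G$, and a graph computed after $i$ levels of recursion is any $H_1$ or $H_2$ produced from a graph computed after $i-1$ levels. *)

From mathcomp Require Import all_boot all_order all_algebra.
Set Implicit Arguments. Unset Strict Implicit. Unset Printing Implicit Defensive.
Import Order.TTheory GRing.Theory Num.Theory.

Section Graphs.
Variable V : finType.

Definition simple_graph (E : {set {set V}}) : Prop :=
  forall e, e \in E -> #|e| = 2.

Definition ceil_div (m k : nat) : nat := (m + k.-1) %/ k.

Definition nedges_in (E : {set {set V}}) (S : {set V}) : nat :=
  #|[set e in E | e \subset S]|.

(* arboricity = max over S with |S| >= 2 of ceil(|E(H[S])| / (|S|-1)) (0 if no such S) *)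
Definition arboricity (E : {set {set V}}) : nat :=
  \max_(S : {set V} | 2 <= #|S|) ceil_div (nedges_in E S) (#|S| - 1).

Definition undir (p : V * V) : {set V} := [set p.1; p.2].

Definition deg_in (E : {set {set V}}) (A : {set V}) (v : V) : nat :=
  #|[set w in A | [set v; w] \in E]|.

(* s is a possible sequence of vertices removed by Procedure
   Forests-Decomposition Orientation: every vertex appears once, and the
   k-th removed vertex has minimum degree in G[A_k], A_k = remaining vertices. *)
Definition peeling_order (E : {set {set V}}) (s : seq V) : Prop :=
  uniq s /\ (forall v, v \in s) /\
  forall k, k < size s ->
    forall x0 : V,
    let A := [set x in drop k s] in
    forall w, w \in A -> deg_in E A (nth x0 s k) <= deg_in E A w.

(* D (a set of directed edges (u,v), meaning u -> v) is an orientation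
   produced by some run of Forests-Decomposition Orientation(G):
   edges are oriented from the earlier removed endpoint to the later one. *)
Definition fd_orientation (E : {set {set V}}) (D : {set V * V}) : Prop :=
  exists s, peeling_order E s /\
    D = [set p : V * V | (undir p \in E) && (index p.1 s < index p.2 s)].

Definition outdeg (F : {set V * V}) (v : V) : nat := #|[set p in F | p.1 == v]|.
Definition indeg (F : {set V * V}) (v : V) : nat := #|[set p in F | p.2 == v]|.

Definition oriented_splitting (F F1 F2 : {set V * V}) (kappa : nat) : Prop :=
  F1 :|: F2 = F /\ F1 :&: F2 = set0 /\
  forall v,
    [/\ outdeg F1 v <= outdeg F2 v + kappa, outdeg F2 v <= outdeg F1 v + kappa,
        indeg F1 v <= indeg F2 v + kappa & indeg F2 v <= indeg F1 v + kappa].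

(* computed D h i F : F (oriented by mu = D) is a graph computed after i levels
   of recursion of Oriented Edge-Coloring(G, D, h), for any admissible choice
   of the splittings (discrepancy at most 1) made by the procedure.
   A splitting at level i happens only when the remaining parameter h - i > 0. *)
Inductive computed (D : {set V * V}) (h : nat) : nat -> {set V * V} -> Prop :=
  | computed0 : computed D h 0 D
  | computedL i F F1 F2 : i < h -> computed D h i F ->
      oriented_splitting F F1 F2 1 -> computed D h i.+1 F1
  | computedR i F F1 F2 : i < h -> computed D h i F ->
      oriented_splitting F F1 F2 1 -> computed D h i.+1 F2.

End Graphs.

From mathcomp Require Import all_boot all_order all_algebra.
From mathcomp Require Import zify ring.
Import Order.TTheory GRing.Theory Num.Theory.

(* Peeling off minimum-degree vertices orients G acyclically with out-degrees
   at most 2 alpha, because a minimum-degree vertex of G[A] has degree at most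
   2 |E(G[A])| / |A| < 2 alpha.  A splitting of discrepancy 1 halves each
   out-degree, rounding up, so after i levels all out-degrees are at most
   d = ceil(2 alpha / 2^i).  An acyclic orientation with out-degrees at most d
   has arboricity at most d: inside any vertex set S, every edge is an out-edge
   of one of the |S| - 1 vertices of S other than the last one in the order.
   Finally ceil(2 alpha / 2^i) <= alpha / 2^(i-1) + 1. *)

Set Implicit Arguments.
Unset Strict Implicit.
Unset Printing Implicit Defensive.

Section OrientedSplitting.
Variable V : finType.
Implicit Types (F D : {set V * V}) (v : V).

Lemma outdeg_splitting F F1 F2 k v : oriented_splitting F F1 F2 k ->
  outdeg F v = outdeg F1 v + outdeg F2 v.
Proof.
case=> <- [disj _]; rewrite /outdeg -cardsUI.
have -> : [set p in F1 | p.1 == v] :&: [set p in F2 | p.1 == v] = set0.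
  by apply/setP=> p; rewrite !inE andbACA -in_setI disj inE.
by rewrite cards0 addn0; apply: eq_card => p; rewrite !inE andb_orl.
Qed.

Lemma oriented_splittingC F F1 F2 k :
  oriented_splitting F F1 F2 k -> oriented_splitting F F2 F1 k.
Proof.
case=> eqF [disj deg]; split; first by rewrite setUC.
split; first by rewrite setIC.
by move=> v; case: (deg v).
Qed.

Lemma outdeg_splitting_half F F1 F2 k v : oriented_splitting F F1 F2 k ->
  2 * outdeg F1 v <= outdeg F v + k.
Proof.
move=> splitF; rewrite (outdeg_splitting v splitF).
by case: splitF => _ [_ /(_ v) [le12 _ _ _]]; lia.
Qed.

Lemma computed_sub D h i F : computed D h i F -> F \subset D.
Proof.
by elim=> // {}i F0 F1 F2 _ _ sub0 [eqF _]; apply: subset_trans sub0;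
  rewrite -eqF ?subsetUl ?subsetUr.
Qed.

Lemma computed_outdeg D h i F v : computed D h i F ->
  2 ^ i * outdeg F v < outdeg D v + 2 ^ i.
Proof.
elim=> [|{}i F0 F1 F2 _ _ IH splitF
        |{}i F0 F1 F2 _ _ IH /oriented_splittingC splitF];
  first by rewrite mul1n; lia.
all: have := outdeg_splitting_half v splitF; rewrite expnS; nia.
Qed.

End OrientedSplitting.

Lemma ceil_div_leq m k d : 0 < k -> (ceil_div m k <= d) = (m <= d * k).
Proof. by move=> k_gt0; rewrite /ceil_div -ltnS ltn_divLR // mulSn; lia. Qed.

Section Arboricity.
Variable V : finType.
Implicit Types (E : {set {set V}}) (F : {set V * V}) (S X : {set V}).

Lemma nedges_in_le_arboricity E S : simple_graph E ->
  nedges_in E S <= arboricity E * (#|S| - 1).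
Proof.
move=> simpleE; case: (leqP 2 #|S|) => [S_ge2|S_le1].
  rewrite -ceil_div_leq; last by rewrite subn_gt0.
  exact: (@leq_bigmax_cond _ (fun S : {set V} => 2 <= #|S|)
    (fun S => ceil_div (nedges_in E S) (#|S| - 1))).
rewrite (_ : #|S| - 1 = 0) ?muln0 ?leqn0 ?cards_eq0; last by lia.
apply/eqP/setP=> e; rewrite !inE.
apply/negbTE/negP=> /andP[/simpleE card_e /subset_leq_card].
by rewrite card_e leqNgt S_le1.
Qed.

Lemma card_tails_in F X :
  #|[set p in F | p.1 \in X]| = \sum_(v in X) outdeg F v.
Proof.
rewrite -sum1dep_card (partition_big (fun p : V * V => p.1) (mem X)) /=;
  last by move=> p /andP[].
apply: eq_bigr => v vX; rewrite sum1dep_card; apply: eq_card => p.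
by rewrite !inE -andbA; case: (p.1 =P v) => [->|_]; rewrite ?vX ?andbF.
Qed.

Variables (r : V -> nat) (F : {set V * V}) (d : nat).
Hypothesis F_ranked : {in F, forall p, r p.1 < r p.2}.
Hypothesis outdeg_le : forall v, outdeg F v <= d.

Lemma nedges_in_ranked S :
  0 < #|S| -> nedges_in (@undir V @: F) S <= d * (#|S| - 1).
Proof.
case/card_gt0P=> x0 x0S.
pose m := [arg max_(x > x0 in S) r x].
have [mS r_max] : m \in S /\ {in S, forall y, r y <= r m}.
  by rewrite /m; case: arg_maxnP.
set T := [set p in F | p.1 \in S :\ m].
have : nedges_in (@undir V @: F) S <= #|T|.
  apply: leq_trans (leq_imset_card (@undir V) T); apply: subset_leq_card.
  apply/subsetP=> _ /[!inE] /andP[/imsetP[p pF ->] /subsetP sub_p].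
  have [p1S p2S] : p.1 \in S /\ p.2 \in S by rewrite !sub_p // !inE eqxx ?orbT.
  rewrite imset_f // !inE pF p1S andbT; apply: contraTneq (F_ranked pF) => ->.
  by rewrite -leqNgt r_max.
move/leq_trans; apply; rewrite card_tails_in.
apply: leq_trans (_ : \sum_(v in S :\ m) d <= _); first exact: leq_sum.
by rewrite sum_nat_const (cardsD1 m S) mS add1n subn1 mulnC.
Qed.

Lemma arboricity_ranked : arboricity (@undir V @: F) <= d.
Proof.
apply/bigmax_leqP => S S_ge2; rewrite ceil_div_leq ?nedges_in_ranked //; lia.
Qed.

End Arboricity.

Section Peeling.
Variables (V : finType) (E : {set {set V}}).
Hypothesis simpleE : simple_graph E.
Implicit Types (A : {set V}) (v w : V).

Lemma deg_in_le_incident A v : v \in A ->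
  deg_in E A v <= #|[set e in E | (e \subset A) && (v \in e)]|.
Proof.
move=> vA; have inj : injective (fun w => [set v; w]).
  move=> w w' eqvw; have : w' \in [set v; w] by rewrite eqvw set22.
  have : w \in [set v; w'] by rewrite -eqvw set22.
  by rewrite !inE => /orP[]/eqP-> /orP[]/eqP.
rewrite /deg_in -(card_imset _ inj); apply: subset_leq_card.
apply/subsetP=> _ /imsetP[w /[!inE] /andP[wA vwE] ->].
by rewrite vwE set21 subUset !sub1set vA wA.
Qed.

Lemma sum_deg_in_le A : \sum_(w in A) deg_in E A w <= 2 * nedges_in E A.
Proof.
apply: leq_trans
  (_ : \sum_(w in A) #|[set e in E | (e \subset A) && (w \in e)]| <= _).
  by apply: leq_sum => w /deg_in_le_incident.
rewrite (eq_bigr (fun w => \sum_(e in E | (e \subset A) && (w \in e)) 1)); last first.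
  by move=> w _; rewrite sum1dep_card; apply: eq_card => e; rewrite !inE.
rewrite (exchange_big_dep (fun e : {set V} => (e \in E) && (e \subset A))) /=;
  last first.
  by move=> w e _ /and3P[-> ->].
rewrite /nedges_in -sum1dep_card big_distrr /=; apply: leq_sum => e /andP[eE _].
rewrite sum1dep_card muln1 -(simpleE eE); apply: subset_leq_card.
by apply/subsetP=> w /[!inE] /and4P[].
Qed.

Lemma min_deg_in_le A v :
  v \in A -> {in A, forall w, deg_in E A v <= deg_in E A w} ->
  deg_in E A v <= 2 * arboricity E.
Proof.
move=> vA v_min; have A_gt0 : 0 < #|A| by apply/card_gt0P; exists v.
have : #|A| * deg_in E A v <= 2 * arboricity E * (#|A| - 1).
  rewrite -sum_nat_const -mulnA.
  apply: leq_trans (_ : \sum_(w in A) deg_in E A w <= _); first exact: leq_sum.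
  by rewrite (leq_trans (sum_deg_in_le A)) // leq_mul2l nedges_in_le_arboricity.
nia.
Qed.

Lemma mem_drop_index (s : seq V) k w : w \in s -> k <= index w s -> w \in drop k s.
Proof.
move=> ws le_k; move: (ws); rewrite -{1}(cat_take_drop k s) mem_cat in_take //.
by rewrite ltnNge le_k.
Qed.

Lemma peeling_outdeg s v : peeling_order E s ->
  outdeg [set p : V * V | (undir p \in E) && (index p.1 s < index p.2 s)] v
    <= 2 * arboricity E.
Proof.
move=> [_ [s_all peel]].
have := peel (index v s); rewrite index_mem s_all => /(_ isT v) /=; rewrite nth_index //.
set A := [set x in drop _ s] => v_min.
have vA : v \in A by rewrite inE mem_drop_index.
apply: leq_trans (min_deg_in_le vA v_min).
rewrite /outdeg /deg_in; set Dv := [set p in _ | p.1 == v].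
have inj : {in Dv &, injective (fun p : V * V => p.2)}.
  by move=> [a b] [c d] /[!inE] /= /andP[_ /eqP->] /andP[_ /eqP->] ->.
rewrite -(card_in_imset inj); apply: subset_leq_card.
apply/subsetP=> _ /imsetP[[u w] /[!inE] /= /andP[/andP[uwE lt_uw] /eqP eq_uv] ->].
by rewrite -eq_uv uwE mem_drop_index // ltnW.
Qed.

End Peeling.

Lemma computed_arboricity (V : finType) (E : {set {set V}}) D h i F :
  simple_graph E -> fd_orientation E D -> computed D h i F ->
  2 ^ i * arboricity (@undir V @: F) < 2 * arboricity E + 2 ^ i.
Proof.
move=> simpleE [s [peel ->]] comp_F.
have ranked_F : {in F, forall p, index p.1 s < index p.2 s}.
  by move=> p /(subsetP (computed_sub comp_F)) /[!inE] /andP[].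
set d := (2 * arboricity E + 2 ^ i).-1 %/ 2 ^ i.
have outdeg_F v : outdeg F v <= d.
  rewrite leq_divRL ?expn_gt0 //.
  have := computed_outdeg v comp_F; have := peeling_outdeg simpleE v peel; lia.
have := leq_divM (2 * arboricity E + 2 ^ i).-1 (2 ^ i).
have := arboricity_ranked (r := index^~ s) ranked_F outdeg_F; rewrite -/d.
move: (arboricity _) (2 ^ i) (expn_gt0 2 i) => a t t_gt0; nia.
Qed.

Local Open Scope ring_scope.

Lemma ler_nat_div_exp2 (R : numFieldType) (a b i : nat) :
  (2 ^ i * a <= 2 * b + 2 ^ i)%N -> a%:R <= b%:R / (2 : R) ^ (Posz i - 1) + 1.
Proof.
have exp2_gt0 : (0 : R) < 2 ^+ i by rewrite exprn_gt0.
have -> : b%:R / (2 : R) ^ (Posz i - 1) + 1 = (2 * b + 2 ^ i)%N%:R / (2 ^ i)%N%:R.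
  rewrite expfzDr ?pnatr_eq0 // (_ : (2 : R) ^ (- 1) = 2^-1) //.
  rewrite (_ : (2 : R) ^ (Posz i) = 2 ^+ i) // natrD natrM natrX.
  by field; rewrite gt_eqF.
by rewrite ler_pdivlMr ?natrX // -natrX -natrM ler_nat mulnC.
Qed.

Theorem lemma4p10 (V : finType) (E : {set {set V}}) (h : nat) (D : {set V * V}) :
  simple_graph E ->
  (2 ^ h <= arboricity E)%N ->
  fd_orientation E D ->
  forall (i : nat) (F : {set V * V}),
    (i <= h)%N ->
    computed D h i F ->
    ((arboricity (@undir V @: F))%:R : rat)
      <= (arboricity E)%:R / (2 : rat) ^ (Posz i - 1) + 1.
Proof.
move=> simpleE _ fdD i F _ comp_F.
exact/ler_nat_div_exp2/ltnW/(computed_arboricity simpleE fdD comp_F).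
Qed.
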